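(* Let $W$ be an entanglement witness on $\mathbb{C}^m\otimes\mathbb{C}^n$. Then $W^+$ is either an entanglement witness or positive semidefinite (a state, up to normalization). Specifically: (i) $W^+$ is an entanglement witness if and only if $W$ detects a real entangled state; (ii) $W^+$ is a PPT state if and only if $W$ detects no real entangled state and $W^\Gamma$ is either an NPT state or an entanglement witness detecting no real entangled state; (iii) $W^+$ is an NPT state if and only if $W$ detects no real entangled state and $W^\Gamma$ is an entanglement witness detecting at least one real entangled state. Moreover, if $W^+$ is an NPT state, then every real entangled state detected by $W^\Gamma$ is NPT.
   Context: An entanglement witness on $\mathbb{C}^m\otimes\mathbb{C}^n$ is a Hermitian matrix $W$ with $\mathrm{tr}(W\sigma)\ge0$ for all separable states $\sigma$ and $\mathrm{tr}(W\sigma)<0$ for at least one entangled state; $W$ detects $\rho$ if $\mathrm{tr}(W\rho)<0$. A real state is one whose density matrix has real entries. $W^+=\frac12(W+W^* )$ where $W^*$ is the entrywise complex conjugate; $M^\Gamma$ is the partial transpose with respect to the first subsystem. A (possibly unnormalized) positive semidefinite $\rho$ is PPT if $\rho^\Gamma\ge0$ and NPT otherwise. *)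

From HB Require Import structures.
From mathcomp Require Import all_boot all_order all_algebra.
From mathcomp Require Import complex mxtens.
From mathcomp Require Import reals.
Set Implicit Arguments. Unset Strict Implicit. Unset Printing Implicit Defensive.
Import Order.TTheory GRing.Theory Num.Theory.
Local Open Scope ring_scope.

Section QDefs.
Variable R : realType.
Local Notation C := (complex R).
Variables m n : nat.
Local Notation N := (m * n)%N.

Definition conjm (p q : nat) (A : 'M[C]_(p, q)) : 'M[C]_(p, q) := map_mx Num.conj A.

Definition adjm (p q : nat) (A : 'M[C]_(p, q)) : 'M[C]_(q, p) := (conjm A)^T.

Definition hermitian (p : nat) (A : 'M[C]_p) : Prop := adjm A = A.

Definition psd (p : nat) (A : 'M[C]_p) : Prop :=
  hermitian A /\ forall x : 'cV[C]_p, 0 <= (adjm x *m A *m x) 0 0.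

Definition plus_part (W : 'M[C]_N) : 'M[C]_N := 2^-1 *: (W + conjm W).

(* partial transpose with respect to the first subsystem C^m of C^m (x) C^n,
   with the Kronecker index convention of [tensmx] (index (i,k) |-> i*n+k) *)
Definition ptrans (A : 'M[C]_N) : 'M[C]_N :=
  \matrix_(p, q) A (mxtens_index ((mxtens_unindex q).1, (mxtens_unindex p).2))
                   (mxtens_index ((mxtens_unindex p).1, (mxtens_unindex q).2)).

Definition state (rho : 'M[C]_N) : Prop := psd rho /\ \tr rho = 1.

Definition separable (rho : 'M[C]_N) : Prop :=
  exists (K : nat) (A : 'I_K -> 'M[C]_m) (B : 'I_K -> 'M[C]_n),
    (forall k, psd (A k)) /\ (forall k, psd (B k)) /\
    rho = \sum_(k < K) (A k *t B k).

Definition entangled_state (rho : 'M[C]_N) : Prop := state rho /\ ~ separable rho.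

Definition real_mx (p q : nat) (A : 'M[C]_(p, q)) : Prop := forall i j, A i j \is Num.real.

Definition real_entangled_state (rho : 'M[C]_N) : Prop :=
  entangled_state rho /\ real_mx rho.

Definition detects (W rho : 'M[C]_N) : Prop := \tr (W *m rho) < 0.

Definition entanglement_witness (W : 'M[C]_N) : Prop :=
  [/\ hermitian W,
      (forall sigma, state sigma -> separable sigma -> 0 <= \tr (W *m sigma)) &
      exists rho, entangled_state rho /\ detects W rho].

Definition detects_real_entangled (W : 'M[C]_N) : Prop :=
  exists rho, real_entangled_state rho /\ detects W rho.

(* (possibly unnormalized) PPT / NPT states *)
Definition PPT (rho : 'M[C]_N) : Prop := psd rho /\ psd (ptrans rho).
Definition NPT (rho : 'M[C]_N) : Prop := psd rho /\ ~ psd (ptrans rho).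

End QDefs.

From Pilot Require Import Defs.
From HB Require Import structures.
From mathcomp Require Import all_boot all_order all_algebra.
From mathcomp Require Import complex mxtens.
From mathcomp Require Import reals.
From mathcomp Require spectral.
From Stdlib Require Classical_Prop.
Set Implicit Arguments. Unset Strict Implicit. Unset Printing Implicit Defensive.
Import Order.TTheory GRing.Theory Num.Theory.
Local Open Scope ring_scope.

(* Complex conjugation and the partial transpose both map separable states to
   separable states, so W^+ and W^Γ are again nonnegative on separable states.
   For any such X, a state rho detected by X^+ may be replaced by its real part
   rho^+, which is still entangled (X is nonnegative on separable states) and
   satisfies tr (X rho^+) = tr (X^+ rho).  Hence X^+ is a witness exactly when
   X detects a real entangled state; otherwise X^+ is nonnegative on every
   state, hence positive semidefinite.  Parts (ii) and (iii) are this
   dichotomy applied to X = W and X = W^Γ, using (W^+)^Γ = (W^Γ)^+; the last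
   claim holds because tr (W^Γ rho) = tr (W^+ rho^Γ) for a real state rho. *)

Section Adjoint.
Variable R : realType.
Local Notation C := (complex R).

Lemma conjmE p q (A : 'M[C]_(p, q)) i j : conjm A i j = (A i j)^*.
Proof. by rewrite mxE. Qed.

Lemma adjmE p q (A : 'M[C]_(p, q)) i j : adjm A i j = (A j i)^*.
Proof. by rewrite !mxE. Qed.

Lemma conjmK p q : involutive (@conjm R p q).
Proof. by move=> A; apply/matrixP => i j; rewrite !mxE conjCK. Qed.

Lemma adjmK p q (A : 'M[C]_(p, q)) : adjm (adjm A) = A.
Proof. by apply/matrixP => i j; rewrite !mxE conjCK. Qed.

Lemma conjmM p q r (A : 'M[C]_(p, q)) (B : 'M[C]_(q, r)) :
  conjm (A *m B) = conjm A *m conjm B.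
Proof. exact: map_mxM. Qed.

Lemma adjmM p q r (A : 'M[C]_(p, q)) (B : 'M[C]_(q, r)) :
  adjm (A *m B) = adjm B *m adjm A.
Proof. by rewrite /adjm conjmM trmx_mul. Qed.

Lemma conjmD p q (A B : 'M[C]_(p, q)) : conjm (A + B) = conjm A + conjm B.
Proof. by apply/matrixP => i j; rewrite !mxE rmorphD. Qed.

Lemma adjmD p q (A B : 'M[C]_(p, q)) : adjm (A + B) = adjm A + adjm B.
Proof. by apply/matrixP => i j; rewrite !mxE rmorphD. Qed.

Lemma conjmZ p q c (A : 'M[C]_(p, q)) : conjm (c *: A) = c^* *: conjm A.
Proof. by apply/matrixP => i j; rewrite !mxE rmorphM. Qed.

Lemma adjmZ p q c (A : 'M[C]_(p, q)) : adjm (c *: A) = c^* *: adjm A.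
Proof. by apply/matrixP => i j; rewrite !mxE rmorphM. Qed.

Lemma conjm_adjm p q (A : 'M[C]_(p, q)) : conjm (adjm A) = adjm (conjm A).
Proof. by apply/matrixP => i j; rewrite !mxE. Qed.

Lemma conjm_sum p q I (r : seq I) (P : pred I) (F : I -> 'M[C]_(p, q)) :
  conjm (\sum_(i <- r | P i) F i) = \sum_(i <- r | P i) conjm (F i).
Proof.
apply/matrixP => a b; rewrite mxE !summxE rmorph_sum.
by apply: eq_bigr => i _; rewrite mxE.
Qed.

Lemma mxtrace_conjm p (A : 'M[C]_p) : \tr (conjm A) = (\tr A)^*.
Proof. by rewrite /mxtrace rmorph_sum; apply: eq_bigr => i _; rewrite mxE. Qed.

Lemma conjm_herm p (A : 'M[C]_p) : Defs.hermitian A -> conjm A = A^T.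
Proof.
by move=> hA; apply/matrixP => i j; move/matrixP: hA => /(_ j i); rewrite !mxE => <-.
Qed.

Lemma hermitian_conjm p (A : 'M[C]_p) : Defs.hermitian A -> Defs.hermitian (conjm A).
Proof. by move=> hA; rewrite /Defs.hermitian -conjm_adjm hA. Qed.

Lemma mxtrace_hermM_conj p (A B : 'M[C]_p) : Defs.hermitian A -> Defs.hermitian B ->
  (\tr (A *m B))^* = \tr (A *m B).
Proof.
move=> hA hB; rewrite -mxtrace_conjm conjmM !conjm_herm // -trmx_mul mxtrace_tr.
exact: mxtrace_mulC.
Qed.

Lemma mxtrace_hermM_real p (A B : 'M[C]_p) : Defs.hermitian A -> Defs.hermitian B ->
  \tr (A *m B) \is Num.real.
Proof. by move=> hA hB; rewrite CrealE mxtrace_hermM_conj. Qed.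

End Adjoint.

Section PositiveSemidefinite.
Variable R : realType.
Local Notation C := (complex R).

Lemma psd_herm p (A : 'M[C]_p) : psd A -> Defs.hermitian A.
Proof. by case. Qed.

Lemma psd_congr_diag_ge0 p q (A : 'M[C]_p) (P : 'M[C]_(q, p)) i :
  psd A -> 0 <= (P *m A *m adjm P) i i.
Proof.
case=> _ /(_ (adjm (row i P))); rewrite adjmK.
congr (0 <= _); rewrite !mxE; apply: eq_bigr => k _; rewrite !mxE; congr (_ * _).
by apply: eq_bigr => l _; rewrite !mxE.
Qed.

Lemma psd_congr p q (A : 'M[C]_p) (X : 'M[C]_(p, q)) : psd A -> psd (adjm X *m A *m X).
Proof.
move=> pA; split; first by rewrite /Defs.hermitian !adjmM adjmK (psd_herm pA) mulmxA.
move=> y; have := psd_congr_diag_ge0 (adjm (X *m y)) 0 pA.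
by rewrite adjmK adjmM !mulmxA.
Qed.

(* Diagonalize B = P^-1 D P with P unitary: tr (A B) = sum_i (P A P^* )_ii D_ii. *)
Lemma mxtrace_psdM_ge0 p (A B : 'M[C]_p) : psd A -> psd B -> 0 <= \tr (A *m B).
Proof.
move=> pA pB.
have nB : B \is spectral.normalmx.
  by apply/spectral.normalmxP; rewrite -map_trmx -/(conjm B) -/(adjm B) (psd_herm pB).
have /spectral.orthomx_spectralP eB := nB.
set P := spectral.spectralmx B in eB; set d := spectral.spectral_diag B in eB.
have uP : P \is spectral.unitarymx by exact: spectral.spectral_unitarymx.
have iP : invmx P = adjm P by rewrite spectral.invmx_unitary // -map_trmx.
have PP : P *m adjm P = 1%:M by move/spectral.unitarymxP: uP; rewrite -map_trmx.
have dE : diag_mx d = P *m B *m adjm P.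
  by rewrite eB iP !mulmxA PP mul1mx -mulmxA PP mulmx1.
rewrite eB iP !mulmxA mxtrace_mulC !mulmxA mul_mx_diag /mxtrace.
apply: sumr_ge0 => i _; rewrite mxE mulr_ge0 ?psd_congr_diag_ge0 //.
by have := psd_congr_diag_ge0 P i pB; rewrite -dE mxE eqxx mulr1n.
Qed.

Lemma psd0 p : psd (0 : 'M[C]_p).
Proof.
split; first by apply/matrixP => i j; rewrite !mxE conjC0.
by move=> x; rewrite mulmx0 mul0mx mxE.
Qed.

Lemma psdD p (A B : 'M[C]_p) : psd A -> psd B -> psd (A + B).
Proof.
move=> [hA qA] [hB qB]; split; first by rewrite /Defs.hermitian adjmD hA hB.
by move=> x; rewrite mulmxDr mulmxDl mxE addr_ge0.
Qed.

Lemma psdZ p c (A : 'M[C]_p) : 0 <= c -> psd A -> psd (c *: A).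
Proof.
move=> c0 [hA qA]; split.
  by rewrite /Defs.hermitian adjmZ hA (CrealP (ger0_real c0)).
by move=> x; rewrite -scalemxAr -scalemxAl mxE mulr_ge0.
Qed.

Lemma psd_conjm p (A : 'M[C]_p) : psd A -> psd (conjm A).
Proof.
move=> [hA qA]; split; first exact: hermitian_conjm.
by move=> x; have := qA (conjm x); rewrite -conjC_ge0 -conjmE !conjmM conjm_adjm !conjmK.
Qed.

Lemma psd_trmx p (A : 'M[C]_p) : psd A -> psd A^T.
Proof. by move=> pA; rewrite -(conjm_herm (psd_herm pA)); apply: psd_conjm. Qed.

Lemma adjmM_cV_self q (z : 'cV[C]_q) : (adjm z *m z) 0 0 = \sum_i `|z i 0| ^+ 2.
Proof. by rewrite mxE; apply: eq_bigr => i _; rewrite !mxE normCK mulrC. Qed.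

Lemma psd_mulmx_adjm p q (X : 'M[C]_(p, q)) : psd (X *m adjm X).
Proof.
split; first by rewrite /Defs.hermitian adjmM adjmK.
move=> y; rewrite -!mulmxA mulmxA -[adjm y *m X]adjmK adjmM adjmK adjmM_cV_self.
by apply: sumr_ge0 => i _; apply: exprn_ge0.
Qed.

(* The rank-one state x x^* / (x^* x) turns the hypothesis into x^* A x >= 0. *)
Lemma psd_of_mxtrace_states_ge0 p (A : 'M[C]_p) : Defs.hermitian A ->
  (forall rho, psd rho -> \tr rho = 1 -> 0 <= \tr (A *m rho)) -> psd A.
Proof.
move=> hA A_ge0; split => // x.
have [->|x0] := eqVneq x 0; first by rewrite mulmx0 mxE.
set s := (adjm x *m x) 0 0.
have s_gt0 : 0 < s.
  have sq_ge0 i : 0 <= `|x i 0| ^+ 2 by apply: exprn_ge0.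
  rewrite /s adjmM_cV_self lt_def sumr_ge0 // andbT.
  apply: contra x0 => /eqP/psumr_eq0P x_eq0; apply/eqP/matrixP => i j.
  by rewrite ord1 mxE; apply/eqP; rewrite -normr_eq0 -(sqrf_eq0 `|_|) x_eq0.
set rho := s^-1 *: (x *m adjm x).
have rho_psd : psd rho by apply: psdZ; rewrite ?invr_ge0 ?ltW //; apply: psd_mulmx_adjm.
have rho_tr1 : \tr rho = 1.
  by rewrite mxtraceZ mxtrace_mulC /mxtrace big_ord1 mulVf ?gt_eqF.
have := A_ge0 rho rho_psd rho_tr1.
rewrite -scalemxAr mxtraceZ mulmxA mxtrace_mulC mulmxA /mxtrace big_ord1.
by rewrite pmulr_rge0 // invr_gt0.
Qed.

End PositiveSemidefinite.

Section PartialTranspose.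
Variable R : realType.
Local Notation C := (complex R).
Variables m n : nat.
Local Notation N := (m * n)%N.
Local Notation idx := (@mxtens_index m n).

Lemma sum_mxtens_index (F : 'I_N -> C) :
  \sum_p F p = \sum_(i < m) \sum_(k < n) F (idx (i, k)).
Proof.
rewrite (reindex idx) /=; last first.
  by apply: onW_bij; exact: (Bijective (@mxtens_indexK m n) (@mxtens_unindexK m n)).
by rewrite pair_big /=; apply: eq_bigr => -[].
Qed.

Lemma ptransE (A : 'M[C]_N) i k j l :
  ptrans A (idx (i, k)) (idx (j, l)) = A (idx (j, k)) (idx (i, l)).
Proof. by rewrite mxE !mxtens_indexK. Qed.

Lemma ptransK : involutive (@ptrans R m n).
Proof.
move=> A; apply/matrixP => p q.
by case: (mxtens_indexP p) => i k; case: (mxtens_indexP q) => j l; rewrite !ptransE.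
Qed.

Lemma ptransD (A B : 'M[C]_N) : ptrans (A + B) = ptrans A + ptrans B.
Proof. by apply/matrixP => a b; rewrite !mxE. Qed.

Lemma ptransZ c (A : 'M[C]_N) : ptrans (c *: A) = c *: ptrans A.
Proof. by apply/matrixP => a b; rewrite !mxE. Qed.

Lemma ptrans_sum I (r : seq I) (P : pred I) (F : I -> 'M[C]_N) :
  ptrans (\sum_(i <- r | P i) F i) = \sum_(i <- r | P i) ptrans (F i).
Proof. by apply/matrixP => a b; rewrite mxE !summxE; apply: eq_bigr => i _; rewrite mxE. Qed.

Lemma ptrans_conjm (A : 'M[C]_N) : ptrans (conjm A) = conjm (ptrans A).
Proof. by apply/matrixP => a b; rewrite !mxE. Qed.

Lemma ptrans_tensmx (A : 'M[C]_m) (B : 'M[C]_n) : ptrans (A *t B) = A^T *t B.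
Proof.
apply/matrixP => p q; case: (mxtens_indexP p) => i k; case: (mxtens_indexP q) => j l.
by rewrite ptransE !tensmxE mxE.
Qed.

Lemma conjm_tensmx (A : 'M[C]_m) (B : 'M[C]_n) : conjm (A *t B) = conjm A *t conjm B.
Proof.
apply/matrixP => p q; case: (mxtens_indexP p) => i k; case: (mxtens_indexP q) => j l.
by rewrite conjmE !tensmxE !conjmE rmorphM.
Qed.

Lemma adjm_tensmx (A : 'M[C]_m) (B : 'M[C]_n) : adjm (A *t B) = adjm A *t adjm B.
Proof.
apply/matrixP => p q; case: (mxtens_indexP p) => i k; case: (mxtens_indexP q) => j l.
by rewrite adjmE !tensmxE !adjmE rmorphM.
Qed.

Lemma hermitian_ptrans (A : 'M[C]_N) : Defs.hermitian A -> Defs.hermitian (ptrans A).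
Proof.
rewrite /Defs.hermitian => /matrixP hA; apply/matrixP => p q.
case: (mxtens_indexP p) => i k; case: (mxtens_indexP q) => j l.
by rewrite adjmE !ptransE -[RHS]hA adjmE.
Qed.

Lemma mxtrace_ptrans (A : 'M[C]_N) : \tr (ptrans A) = \tr A.
Proof.
rewrite /mxtrace !sum_mxtens_index; apply: eq_bigr => i _; apply: eq_bigr => k _.
by rewrite ptransE.
Qed.

Lemma mxtrace_mulE (X Y : 'M[C]_N) : \tr (X *m Y) =
  \sum_i \sum_k \sum_j \sum_l X (idx (i, k)) (idx (j, l)) * Y (idx (j, l)) (idx (i, k)).
Proof.
rewrite /mxtrace sum_mxtens_index; apply: eq_bigr => i _; apply: eq_bigr => k _.
by rewrite mxE sum_mxtens_index.
Qed.

Lemma mxtrace_ptransC (A B : 'M[C]_N) : \tr (ptrans A *m B) = \tr (A *m ptrans B).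
Proof.
rewrite !mxtrace_mulE.
under eq_bigr => i _ do rewrite exchange_big.
under [RHS]eq_bigr => i _ do rewrite exchange_big.
rewrite exchange_big; apply: eq_bigr => j _; apply: eq_bigr => i _.
by apply: eq_bigr => k _; apply: eq_bigr => l _; rewrite !ptransE.
Qed.

Lemma tensmx_formE (A : 'M[C]_m) (B : 'M[C]_n) (x : 'cV[C]_N) :
  let X := \matrix_(i, k) x (idx (i, k)) 0 in
  (adjm x *m (A *t B) *m x) 0 0 = \tr (adjm X *m A *m X *m B^T).
Proof.
move=> X.
have -> : (adjm x *m (A *t B) *m x) 0 0 = \sum_j \sum_l \sum_i \sum_k
    (x (idx (i, k)) 0)^* * A i j * B k l * x (idx (j, l)) 0.
  rewrite mxE sum_mxtens_index; apply: eq_bigr => j _; apply: eq_bigr => l _.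
  rewrite mxE sum_mxtens_index big_distrl /=; apply: eq_bigr => i _; rewrite big_distrl.
  by apply: eq_bigr => k _; rewrite tensmxE adjmE mulrA.
have -> : \tr (adjm X *m A *m X *m B^T) = \sum_k \sum_l \sum_j \sum_i
    (x (idx (i, k)) 0)^* * A i j * B k l * x (idx (j, l)) 0.
  rewrite /mxtrace; apply: eq_bigr => k _; rewrite mxE; apply: eq_bigr => l _.
  rewrite !mxE big_distrl; apply: eq_bigr => j _; rewrite mxE !big_distrl.
  by apply: eq_bigr => i _; rewrite !mxE; exact: mulrAC.
under eq_bigr => j _ do under eq_bigr => l _ do rewrite exchange_big.
under eq_bigr => j _ do rewrite exchange_big.
by rewrite exchange_big; apply: eq_bigr => k _; exact: exchange_big.
Qed.

Lemma psd_tensmx (A : 'M[C]_m) (B : 'M[C]_n) : psd A -> psd B -> psd (A *t B).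
Proof.
move=> pA pB; split; first by rewrite /Defs.hermitian adjm_tensmx (psd_herm pA) (psd_herm pB).
move=> x; rewrite (tensmx_formE A B x) /=.
by apply: mxtrace_psdM_ge0; [apply: psd_congr | apply: psd_trmx].
Qed.

Lemma separable_psd (rho : 'M[C]_N) : separable rho -> psd rho.
Proof.
move=> [K [A [B [pA [pB ->]]]]].
apply: (big_ind (@psd R N)); [exact: psd0 | exact: psdD | move=> k _].
exact: psd_tensmx.
Qed.

Lemma separable_conjm (rho : 'M[C]_N) : separable rho -> separable (conjm rho).
Proof.
move=> [K [A [B [pA [pB ->]]]]].
exists K, (fun k => conjm (A k)), (fun k => conjm (B k)); split; [|split].
- by move=> k; apply: psd_conjm.
- by move=> k; apply: psd_conjm.
- by rewrite conjm_sum; apply: eq_bigr => k _; rewrite conjm_tensmx.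
Qed.

Lemma separable_ptrans (rho : 'M[C]_N) : separable rho -> separable (ptrans rho).
Proof.
move=> [K [A [B [pA [pB ->]]]]].
exists K, (fun k => (A k)^T), B; split; [|split] => //.
- by move=> k; apply: psd_trmx.
- by rewrite ptrans_sum; apply: eq_bigr => k _; rewrite ptrans_tensmx.
Qed.

End PartialTranspose.

Section Witness.
Variable R : realType.
Local Notation C := (complex R).
Variables m n : nat.
Local Notation N := (m * n)%N.

Definition sep_nonneg (X : 'M[C]_N) : Prop := Defs.hermitian X /\
  forall sigma, state sigma -> separable sigma -> 0 <= \tr (X *m sigma).

Lemma real_mxE p q (A : 'M[C]_(p, q)) : real_mx A <-> conjm A = A.
Proof.
split=> [rA | /matrixP cA i j]; last by apply/CrealP; rewrite -[RHS]cA mxE.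
by apply/matrixP => i j; rewrite mxE; apply/CrealP.
Qed.

Lemma conjC_half : (2^-1 : C)^* = 2^-1.
Proof. by apply/CrealP/ger0_real; rewrite invr_ge0 ler0n. Qed.

Lemma state_conjm (s : 'M[C]_N) : state s -> state (conjm s).
Proof. by case=> ps ts; split; [apply: psd_conjm | rewrite mxtrace_conjm ts conjC1]. Qed.

Lemma state_ptrans (s : 'M[C]_N) : state s -> separable s -> state (ptrans s).
Proof.
case=> _ ts ss; split; last by rewrite mxtrace_ptrans.
exact/separable_psd/separable_ptrans.
Qed.

Lemma hermitian_plus_part (X : 'M[C]_N) :
  Defs.hermitian X -> Defs.hermitian (plus_part X).
Proof.
move=> hX; rewrite /Defs.hermitian /plus_part adjmZ adjmD conjC_half.
by rewrite -conjm_adjm hX.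
Qed.

Lemma psd_plus_part (X : 'M[C]_N) : psd X -> psd (plus_part X).
Proof.
by move=> pX; apply: psdZ; [rewrite invr_ge0 ler0n | apply: psdD => //; apply: psd_conjm].
Qed.

Lemma state_plus_part (s : 'M[C]_N) : state s -> state (plus_part s).
Proof.
case=> ps ts; split; first exact: psd_plus_part.
by rewrite mxtraceZ mxtraceD mxtrace_conjm ts conjC1 mulVf ?pnatr_eq0.
Qed.

Lemma conjm_plus_part (X : 'M[C]_N) : conjm (plus_part X) = plus_part X.
Proof. by rewrite /plus_part conjmZ conjC_half conjmD conjmK addrC. Qed.

Lemma plus_part_id (X : 'M[C]_N) : conjm X = X -> plus_part X = X.
Proof.
by move=> cX; rewrite /plus_part cX -mulr2n -scalerMnr scalerMnl -mulr_natr mulVf ?pnatr_eq0 ?scale1r.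
Qed.

Lemma ptrans_plus_part (X : 'M[C]_N) : ptrans (plus_part X) = plus_part (ptrans X).
Proof. by rewrite /plus_part ptransZ ptransD ptrans_conjm. Qed.

Lemma mxtrace_plus_partM (X rho : 'M[C]_N) : Defs.hermitian X -> Defs.hermitian rho ->
  \tr (plus_part X *m rho) = 2^-1 * (\tr (X *m rho) + \tr (X *m conjm rho)).
Proof.
move=> hX hr; rewrite /plus_part -scalemxAl mxtraceZ mulmxDl mxtraceD.
rewrite -[rho in conjm X *m rho]conjmK -conjmM mxtrace_conjm mxtrace_hermM_conj //.
exact: hermitian_conjm.
Qed.

Lemma mxtrace_plus_partC (X rho : 'M[C]_N) : Defs.hermitian X -> Defs.hermitian rho ->
  \tr (plus_part X *m rho) = \tr (X *m plus_part rho).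
Proof.
by move=> hX hr; rewrite mxtrace_plus_partM // -scalemxAr mxtraceZ mulmxDr mxtraceD.
Qed.

Lemma witness_sep_nonneg (X : 'M[C]_N) : entanglement_witness X -> sep_nonneg X.
Proof. by case. Qed.

Lemma sep_nonneg_plus_part (X : 'M[C]_N) : sep_nonneg X -> sep_nonneg (plus_part X).
Proof.
move=> [hX X_ge0]; split=> [|s ss sep]; first exact: hermitian_plus_part.
rewrite mxtrace_plus_partM //; last exact: psd_herm ss.1.
apply: mulr_ge0; first by rewrite invr_ge0 ler0n.
by apply: addr_ge0; [exact: X_ge0 | apply: X_ge0; [exact: state_conjm | exact: separable_conjm]].
Qed.

Lemma sep_nonneg_ptrans (X : 'M[C]_N) : sep_nonneg X -> sep_nonneg (ptrans X).
Proof.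
move=> [hX X_ge0]; split=> [|s ss sep]; first exact: hermitian_ptrans.
by rewrite mxtrace_ptransC; apply: X_ge0; [exact: state_ptrans | exact: separable_ptrans].
Qed.

Lemma psd_not_detects (X rho : 'M[C]_N) : psd X -> psd rho -> ~ detects X rho.
Proof. by move=> pX prho; rewrite /detects le_gtF // mxtrace_psdM_ge0. Qed.

Lemma witness_not_psd (X : 'M[C]_N) : entanglement_witness X -> ~ psd X.
Proof. by move=> [_ _ [rho [[[prho _] _] det]]] pX; exact: psd_not_detects det. Qed.

Lemma psd_not_detects_real (X : 'M[C]_N) : psd X -> ~ detects_real_entangled X.
Proof. by move=> pX [rho [[[[prho _] _] _] det]]; exact: psd_not_detects det. Qed.

Lemma witness_of_detects_real (X : 'M[C]_N) :
  sep_nonneg X -> detects_real_entangled X -> entanglement_witness X.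
Proof. by move=> [hX X_ge0] [rho [[ent _] det]]; split=> //; exists rho. Qed.

Lemma sep_nonneg_witness_or_psd (X : 'M[C]_N) :
  sep_nonneg X -> entanglement_witness X \/ psd X.
Proof.
move=> [hX X_ge0].
have [detected|undetected] :=
  Classical_Prop.classic (exists rho, entangled_state rho /\ detects X rho).
  by left; split.
right; apply: psd_of_mxtrace_states_ge0 => // rho prho trho.
have [sep|ent] := Classical_Prop.classic (separable rho); first exact: X_ge0.
have hr := psd_herm prho.
rewrite real_leNgt ?real0 ?mxtrace_hermM_real //.
by apply/negP => det; apply: undetected; exists rho.
Qed.

Lemma witness_plus_partE (X : 'M[C]_N) : sep_nonneg X ->
  entanglement_witness (plus_part X) <-> detects_real_entangled X.
Proof.
move=> nX; have [hX X_ge0] := nX; split.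
  move=> [_ _ [rho [[sr not_sep] det]]]; have hr := psd_herm sr.1.
  exists (plus_part rho); split; last by rewrite /detects -mxtrace_plus_partC.
  split; last exact/real_mxE/conjm_plus_part.
  split; first exact: state_plus_part.
  move=> /(X_ge0 _ (state_plus_part sr)).
  by rewrite -mxtrace_plus_partC // => /le_gtF; rewrite det.
move=> [rho [[[sr not_sep] rr] det]]; have [hP P_ge0] := sep_nonneg_plus_part nX.
split=> //; exists rho; split=> //.
have hr := psd_herm sr.1.
by rewrite /detects mxtrace_plus_partC // plus_part_id //; apply/real_mxE.
Qed.

Lemma psd_plus_partE (X : 'M[C]_N) : sep_nonneg X ->
  psd (plus_part X) <-> ~ detects_real_entangled X.
Proof.
move=> nX; split=> [pP /(witness_plus_partE nX) eP | undetected].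
  exact: witness_not_psd eP pP.
by case: (sep_nonneg_witness_or_psd (sep_nonneg_plus_part nX)) => // /(witness_plus_partE nX).
Qed.

Lemma detects_real_of_not_psd_plus_part (X : 'M[C]_N) : sep_nonneg X ->
  ~ psd (plus_part X) -> detects_real_entangled X.
Proof.
move=> nX not_psd; apply/(witness_plus_partE nX).
by case: (sep_nonneg_witness_or_psd (sep_nonneg_plus_part nX)).
Qed.

Lemma NPT_ptrans_witnessE (W : 'M[C]_N) :
  entanglement_witness W -> NPT (ptrans W) <-> psd (ptrans W).
Proof. by move=> eW; split=> [[]//|pG]; split; rewrite ?ptransK //; exact: witness_not_psd. Qed.

Lemma NPT_of_detects_ptrans (W rho : 'M[C]_N) : Defs.hermitian W ->
  psd (plus_part W) -> psd rho -> real_mx rho -> detects (ptrans W) rho -> NPT rho.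
Proof.
move=> hW pP prho /real_mxE rr det; split=> // pG; apply: (psd_not_detects pP pG).
have hG := hermitian_ptrans (psd_herm prho).
by rewrite /detects mxtrace_plus_partC // plus_part_id -?mxtrace_ptransC // -ptrans_conjm rr.
Qed.

End Witness.

Unset Implicit Arguments.
Theorem corollary1 (R : realType) (m n : nat) (W : 'M[complex R]_(m * n)) :
  entanglement_witness W ->
  [/\ entanglement_witness (plus_part W) \/ psd (plus_part W),
      (entanglement_witness (plus_part W) <-> detects_real_entangled W),
      (PPT (plus_part W) <->
         ~ detects_real_entangled W /\
         (NPT (ptrans W) \/
          (entanglement_witness (ptrans W) /\ ~ detects_real_entangled (ptrans W)))),
      (NPT (plus_part W) <->
         [/\ ~ detects_real_entangled W, entanglement_witness (ptrans W)
           & detects_real_entangled (ptrans W)]) &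
      (NPT (plus_part W) ->
         forall rho, real_entangled_state rho -> detects (ptrans W) rho -> NPT rho)].
Proof.
move=> eW; have nW := witness_sep_nonneg eW; have nWG := sep_nonneg_ptrans nW.
have psdP := psd_plus_partE nW; have psdPG := psd_plus_partE nWG.
have nptG := NPT_ptrans_witnessE eW.
split.
- exact: sep_nonneg_witness_or_psd (sep_nonneg_plus_part nW).
- exact: witness_plus_partE.
- rewrite /PPT ptrans_plus_part; split=> [[/psdP nd /psdPG ndG] | [nd ndG]].
    split=> //; case: (sep_nonneg_witness_or_psd nWG) => [eG | /nptG]; by [right | left].
  split; first exact/psdP.
  by apply/psdPG; case: ndG => [/nptG/psd_not_detects_real | []].
- rewrite /NPT ptrans_plus_part.
  split=> [[/psdP nd /(detects_real_of_not_psd_plus_part nWG) dG] | [nd _ dG]].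
    by split=> //; exact: witness_of_detects_real.
  by split=> [|/psdPG]; [exact/psdP | apply].
- move=> [pP _] rho [[[prho _] _] rr].
  exact: NPT_of_detects_ptrans nW.1 pP prho rr.
Qed.
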